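(* Let $f:\{0,1\}^n\to\{0,1\}^m$ be a Boolean function which is either constant or balanced, and suppose $\mathbf{0}\in f(\{0,1\}^n)$. For each $i=0,\dots,m-1$ run the algorithm $\mathrm{GPK}(\mathbf{e}_i)$ and let $\delta_i\in\{0,1\}^n$ be its output. If $f$ is constant, then with certainty $\delta_i=\mathbf{0}$ for all $i$; if $f$ is balanced, then with certainty $\delta_i\neq\mathbf{0}$ for at least one $i$. Consequently, deciding ''constant'' if all $\delta_i=\mathbf{0}$ and ''balanced'' otherwise is always correct.
   Context: A function $f:\{0,1\}^n\to\{0,1\}^m$ is constant if $f(\mathbf{x})$ is the same for all $\mathbf{x}$, and balanced if it takes exactly two distinct values, each on exactly half of the inputs. Bits are indexed from the right starting at $0$ and $\mathbf{e}_i=0^{m-1-i}\,1\,0^{i}\in\{0,1\}^m$. For strings $\mathbf{y},\mathbf{z}$ of equal length, $\mathbf{y}\oplus\mathbf{z}$ is bitwise XOR and $\mathbf{y}\cdot\mathbf{z}=\bigoplus_j y_jz_j$. $\mathbf{U}_f$ is the unitary with $\mathbf{U}_f(\ket{\mathbf{x}}_n\otimes\ket{\mathbf{z}}_m)=\ket{\mathbf{x}}_n\otimes\ket{\mathbf{z}\oplus f(\mathbf{x})}_m$; $\mathbf{H}_k=\mathbf{H}^{\otimes k}$ with $\mathbf{H}$ the one-qubit Hadamard gate. The algorithm $\mathrm{GPK}(\mathbf{y})$ for $\mathbf{y}\in\{0,1\}^m$: start in $\ket{\mathbf{0}}_n\otimes\ket{\mathbf{0}}_m$; apply Pauli $\mathbf{X}$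 gates to get $\ket{\mathbf{0}}_n\otimes\ket{\mathbf{y}}_m$; apply $\mathbf{H}_{n+m}$; apply $\mathbf{U}_f$; apply $\mathbf{H}_n$ to the first register; measure the first register in the computational basis, giving the output in $\{0,1\}^n$. *)

From HB Require Import structures.
From mathcomp Require Import all_boot all_order all_algebra all_field.
Set Implicit Arguments. Unset Strict Implicit. Unset Printing Implicit Defensive.
Import Order.TTheory GRing.Theory Num.Theory.
Local Open Scope ring_scope.

Notation bits k := {ffun 'I_k -> bool}.

Definition zerob (k : nat) : bits k := [ffun => false].
Definition xorb_vec (k : nat) (y z : bits k) : bits k := [ffun j => xorb (y j) (z j)].
Definition ebit (k : nat) (i : 'I_k) : bits k := [ffun j => j == i].

Definition is_constant (n m : nat) (f : bits n -> bits m) : Prop :=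
  exists c : bits m, forall x, f x = c.

Definition is_balanced (n m : nat) (f : bits n -> bits m) : Prop :=
  exists a b : bits m, a != b /\ (forall x, f x = a \/ f x = b) /\
    (#|[set x | f x == a]| * 2 = 2 ^ n)%N /\ (#|[set x | f x == b]| * 2 = 2 ^ n)%N.

(* Quantum states on a finite computational basis T, and operators given by
   their matrix entries  O a b = <a| O |b>. *)
Definition qstate (T : finType) := T -> algC.
Definition qop (T : finType) := T -> T -> algC.

Definition apply_op (T : finType) (O : qop T) (psi : qstate T) : qstate T :=
  fun a => \sum_(b : T) O a b * psi b.

Definition ket (T : finType) (a : T) : qstate T := fun b => (a == b)%:R.

Definition idop (T : finType) : qop T := fun a b => (a == b)%:R.

Definition tensop (S T : finType) (A : qop S) (B : qop T) : qop (S * T)%type :=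
  fun a b => A a.1 b.1 * B a.2 b.2.

(* One-qubit gates, basis |false> = |0>, |true> = |1>. *)
Definition gate := bool -> bool -> algC.
Definition hadamard : gate := fun b c => (if b && c then -1 else 1) / sqrtC 2%:R.
Definition pauliX : gate := fun b c => (b != c)%:R.
Definition gate_id : gate := fun b c => (b == c)%:R.

Definition tensor_gates (k : nat) (G : 'I_k -> gate) : qop (bits k) :=
  fun a b => \prod_(j < k) G j (a j) (b j).

Definition Hk (k : nat) : qop (bits k) := tensor_gates (fun _ => hadamard).

Definition Xgates (k : nat) (y : bits k) : qop (bits k) :=
  tensor_gates (fun j => if y j then pauliX else gate_id).

(* U_f |x>|z> = |x>|z xor f(x)> *)
Definition Uf (n m : nat) (f : bits n -> bits m) : qop (bits n * bits m)%type :=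
  fun a b => ((a.1 == b.1) && (a.2 == xorb_vec b.2 (f b.1)))%:R.

Definition gpk_state (n m : nat) (f : bits n -> bits m) (y : bits m)
  : qstate (bits n * bits m)%type :=
  let psi0 := ket (zerob n, zerob m) in
  let psi1 := apply_op (tensop (@idop _) (Xgates y)) psi0 in
  let psi2 := apply_op (tensop (@Hk n) (@Hk m)) psi1 in
  let psi3 := apply_op (Uf f) psi2 in
  apply_op (tensop (@Hk n) (@idop _)) psi3.

(* Born rule: probability that measuring the first register yields w. *)
Definition gpk_prob (n m : nat) (f : bits n -> bits m) (y : bits m) (w : bits n) : algC :=
  \sum_(z : bits m) `|gpk_state f y (w, z)| ^+ 2.

(* Independent runs GPK(e_0), ..., GPK(e_{m-1}): probability that the output
   tuple (delta_0, ..., delta_{m-1}) lies in the event E. *)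
Definition runs_prob (n m : nat) (f : bits n -> bits m)
  (E : pred {ffun 'I_m -> bits n}) : algC :=
  \sum_(d : {ffun 'I_m -> bits n} | E d) \prod_(i < m) gpk_prob f (ebit i) (d i).

(* Before measurement GPK(y) is in the state
   2^-n 2^-(m/2) sum_(w,z) (-1)^(z.y) W(w) |w>|z>  with
   W(w) = sum_x (-1)^(w.x + y.f(x)), so the output w has probability
   W(w)^2 / 4^n, and these sum to 1 by Parseval.  For constant f,
   W(w) = +-2^n [w = 0], so every run outputs 0.  For balanced f with 0 in its
   range, the nonzero value c of f has some bit c_i = 1, so y.f(x) = f(x)_i for
   y = e_i and W(0) = sum_x (-1)^(f(x)_i) = 0: the run GPK(e_i) never outputs 0. *)
From HB Require Import structures.
From mathcomp Require Import all_boot all_order all_algebra all_field.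
From mathcomp Require Import ring zify.
Set Implicit Arguments. Unset Strict Implicit. Unset Printing Implicit Defensive.
Import Order.TTheory GRing.Theory Num.Theory.
Local Open Scope ring_scope.

Section Bits.
Variable k : nat.
Implicit Types a b u v : bits k.

Lemma card_bits : #|{: bits k}| = (2 ^ k)%N.
Proof. by rewrite card_ffun card_bool card_ord. Qed.

Lemma bits_neq0E v : (v != zerob k) = [exists j, v j].
Proof.
apply/idP/idP => [|/existsP[j vj]]; last first.
  by apply: contraTneq vj => ->; rewrite ffunE.
apply: contraR => /existsPn v0; apply/eqP/ffunP => j.
by rewrite ffunE; apply/negbTE.
Qed.

Lemma xorb_vecvv v : xorb_vec v v = zerob k.
Proof. by apply/ffunP => j; rewrite !ffunE; case: (v j). Qed.

Lemma xorb_vecK v : cancel (fun u => xorb_vec u v) (fun u => xorb_vec u v).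
Proof. by move=> u; apply/ffunP => j; rewrite !ffunE; case: (u j); case: (v j). Qed.

Lemma xorb_vec_eq0 u v : (xorb_vec u v == zerob k) = (u == v).
Proof.
apply/eqP/eqP => [uv0|->]; last exact: xorb_vecvv.
by rewrite -[u](xorb_vecK v) uv0; apply/ffunP => j; rewrite !ffunE.
Qed.

Lemma eq_xorb_vec a b v : (b == xorb_vec a v) = (xorb_vec b v == a).
Proof. by apply/eqP/eqP => [->|<-]; rewrite xorb_vecK. Qed.

Definition walsh a b : algC := \prod_(j < k) (if a j && b j then -1 else 1).

Lemma walshC a b : walsh a b = walsh b a.
Proof. by apply: eq_bigr => j _; rewrite andbC. Qed.

Lemma walsh0l b : walsh (zerob k) b = 1.
Proof. by apply: big1 => j _; rewrite ffunE. Qed.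

Lemma walsh_xorl a b v : walsh (xorb_vec a b) v = walsh a v * walsh b v.
Proof.
rewrite /walsh -big_split; apply: eq_bigr => j _ /=; rewrite ffunE.
by case: (a j); case: (b j); case: (v j); rewrite /= ?mulN1r ?opprK ?mulr1 ?mul1r.
Qed.

Lemma walsh_xorr a u v : walsh a (xorb_vec u v) = walsh a u * walsh a v.
Proof. by rewrite !(walshC a) walsh_xorl. Qed.

Lemma walsh_mulss a v : walsh a v * walsh a v = 1.
Proof. by rewrite -walsh_xorl xorb_vecvv walsh0l. Qed.

Lemma walsh_real a b : walsh a b \is Num.real.
Proof. by apply: rpred_prod => j _; case: ifP; rewrite ?rpredN1 ?rpred1. Qed.

Lemma norm_walsh a b : `|walsh a b| = 1.
Proof.
by rewrite normr_prod; apply: big1 => j _; case: ifP; rewrite ?normrN1 ?normr1.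
Qed.

Lemma walsh_ebit v i : walsh v (ebit i) = if v i then -1 else 1.
Proof.
rewrite /walsh (bigD1 i) //= big1 ?mulr1; first by rewrite ffunE eqxx andbT.
by move=> j ji; rewrite ffunE (negbTE ji) andbF.
Qed.

Lemma sum_walsh v : \sum_w walsh w v = (v == zerob k)%:R * 2%:R ^+ k.
Proof.
rewrite /walsh -(bigA_distr_bigA (fun j (b : bool) =>
  (if b && v j then -1 else 1 : algC))) /=.
under eq_bigr => j _ do rewrite big_bool /=.
have [-> | v0] := eqVneq v (zerob k).
  under eq_bigr => j _ do rewrite ffunE.
  by rewrite mul1r prodr_const card_ord.
move: v0; rewrite bits_neq0E => /existsP[j vj].
by rewrite mul0r (bigD1 j) //= vj addNr mul0r.
Qed.

End Bits.

Lemma sum_sign_half (T : finType) (P : pred T) :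
  (#|P| * 2 = #|T|)%N -> \sum_x (if P x then -1 else 1 : algC) = 0.
Proof.
move=> halfP; rewrite (bigID P) /=.
under eq_bigr => x Px do rewrite Px.
under [X in _ + X]eq_bigr => x nPx do rewrite (negbTE nPx).
rewrite !sumr_const (_ : #|[predC P]| = #|P|) ?mulNrn ?addNr //.
by move: (cardC P); rewrite -halfP; lia.
Qed.

Lemma prod_nat_forall (I : finType) (P : pred I) :
  \prod_i ((P i)%:R : algC) = [forall i, P i]%:R.
Proof.
have [/forallP allP | /forallPn [i nPi]] := boolP [forall i, P i].
  by apply: big1 => i _; rewrite allP.
by rewrite (bigD1 i) //= (negbTE nPi) mul0r.
Qed.

Lemma Hk_walsh k (a b : bits k) : Hk a b = walsh a b * (sqrtC 2%:R)^-1 ^+ k.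
Proof.
by rewrite -[k in _ ^+ k]card_ord -prodr_const /Hk /tensor_gates -big_split.
Qed.

Lemma Xgates0 k (y v : bits k) : Xgates y v (zerob k) = (v == y)%:R.
Proof.
have -> : (v == y) = [forall j, v j == y j].
  by apply/eqP/forallP => [-> //|vy]; apply/ffunP => j; apply/eqP.
rewrite -prod_nat_forall; apply: eq_bigr => j _; rewrite ffunE.
by case: (y j); case: (v j).
Qed.

Section Operators.
Variable T : finType.
Implicit Types (O : qop T) (psi phi : qstate T).

Lemma sum_ketr (F : T -> algC) a : \sum_c F c * ket a c = F a.
Proof.
rewrite (bigD1 a) //= /ket eqxx mulr1 big1 ?addr0 // => c ca.
by rewrite eq_sym (negbTE ca) mulr0.
Qed.

Lemma sum_ketl (F : T -> algC) a : \sum_c ket a c * F c = F a.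
Proof. by rewrite -[RHS](sum_ketr F); apply: eq_bigr => c _; rewrite mulrC. Qed.

Lemma apply_op_ket O a b : apply_op O (ket a) b = O b a.
Proof. exact: sum_ketr. Qed.

Lemma eq_apply_op O psi phi : psi =1 phi -> apply_op O psi =1 apply_op O phi.
Proof. by move=> eq_psi b; apply: eq_bigr => a _; rewrite eq_psi. Qed.

End Operators.

Lemma apply_tensop_idr (S T : finType) (A : qop S) (psi : qstate (S * T)%type) a z :
  apply_op (tensop A (@idop T)) psi (a, z) = \sum_x A a x * psi (x, z).
Proof.
transitivity (\sum_x \sum_z' tensop A (@idop T) (a, z) (x, z') * psi (x, z')).
  by rewrite pair_bigA; apply: eq_bigr => -[].
apply: eq_bigr => x _.
by under eq_bigr => z' _ do rewrite /tensop /idop /= mulrAC; rewrite sum_ketr.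
Qed.

Lemma apply_Xgates_ket0 n m (y : bits m) :
  apply_op (tensop (@idop _) (Xgates y)) (ket (zerob n, zerob m)) =1 ket (zerob n, y).
Proof.
move=> [u v]; rewrite apply_op_ket /tensop /idop Xgates0 /ket /= xpair_eqE.
by rewrite -natrM mulnb eq_sym (eq_sym v).
Qed.

Lemma apply_Uf n m (f : bits n -> bits m) psi x z :
  apply_op (Uf f) psi (x, z) = psi (x, xorb_vec z (f x)).
Proof.
rewrite /apply_op -[RHS](sum_ketl psi); apply: eq_bigr => -[x' z'] _; congr (_ * _).
rewrite /Uf /ket /= xpair_eqE; congr (_ %:R).
by have [<-|] //= := eqVneq x x'; rewrite eq_xorb_vec.
Qed.

Section GPK.
Variables (n m : nat) (f : bits n -> bits m).

Definition walsh_sum (y : bits m) (w : bits n) : algC :=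
  \sum_x walsh w x * walsh (f x) y.

Lemma walsh_sum_real y w : walsh_sum y w \is Num.real.
Proof. by apply: rpred_sum => x _; rewrite rpredM ?walsh_real. Qed.

Lemma gpk_stateE y w z : gpk_state f y (w, z) =
  walsh z y * walsh_sum y w * (sqrtC 2%:R)^-1 ^+ (n + n + m).
Proof.
rewrite /gpk_state apply_tensop_idr /walsh_sum mulr_sumr mulr_suml.
apply: eq_bigr => x _.
rewrite apply_Uf (eq_apply_op _ (@apply_Xgates_ket0 n m y)) apply_op_ket /tensop /=.
rewrite !Hk_walsh (walshC x) walsh0l walsh_xorl !exprD.
ring.
Qed.

Lemma gpk_probE y w : gpk_prob f y w = walsh_sum y w ^+ 2 / 2%:R ^+ (n + n).
Proof.
have norm_c2 : `|(sqrtC 2%:R)^-1| ^+ 2 = 2%:R^-1 :> algC.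
  by rewrite normfV ger0_norm ?sqrtC_ge0 ?ler0n // exprVn sqrtCK.
rewrite /gpk_prob.
under eq_bigr => z _ do rewrite gpk_stateE !normrM normrX norm_walsh mul1r
  !exprMn real_normK ?walsh_sum_real // -exprM mulnC exprM norm_c2.
rewrite sumr_const card_bits -[_ *+ (2 ^ m)%N]mulr_natr natrX exprD -!mulrA.
by rewrite -exprMn mulVf ?pnatr_eq0 // expr1n mulr1 exprVn.
Qed.

Lemma sum_walsh_sum_sqr y : \sum_w walsh_sum y w ^+ 2 = 2%:R ^+ (n + n).
Proof.
rewrite /walsh_sum.
set g := fun x => walsh (f x) y.
have sqr_sum w : (\sum_x walsh w x * g x) ^+ 2 =
    \sum_x \sum_x' g x * g x' * walsh w (xorb_vec x x').
  rewrite expr2 mulr_suml; apply: eq_bigr => x _; rewrite mulr_sumr.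
  by apply: eq_bigr => x' _; rewrite walsh_xorr; ring.
rewrite (eq_bigr _ (fun w _ => sqr_sum w)) exchange_big /=.
under eq_bigr => x _ do rewrite exchange_big /=.
have orth x x' : \sum_w g x * g x' * walsh w (xorb_vec x x') =
    g x * g x' * 2%:R ^+ n * ket x x'.
  by rewrite -mulr_sumr sum_walsh xorb_vec_eq0 /ket; ring.
under eq_bigr => x _ do rewrite (eq_bigr _ (fun x' _ => orth x x')) sum_ketr walsh_mulss mul1r.
by rewrite sumr_const card_bits -[_ *+ (2 ^ n)%N]mulr_natr natrX exprD.
Qed.

Lemma sum_gpk_prob y : \sum_w gpk_prob f y w = 1.
Proof.
under eq_bigr do rewrite gpk_probE.
by rewrite -mulr_suml sum_walsh_sum_sqr mulfV // expf_neq0 // pnatr_eq0.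
Qed.

Lemma gpk_prob_const c y w :
  (forall x, f x = c) -> gpk_prob f y w = (w == zerob n)%:R.
Proof.
move=> fc; rewrite gpk_probE /walsh_sum.
under eq_bigr => x _ do rewrite fc walshC.
rewrite -mulr_suml sum_walsh; have [_|_] := eqVneq w (zerob n).
  rewrite mul1r exprMn [walsh c y ^+ 2]expr2 walsh_mulss mulr1 expr2 -exprD.
  by rewrite mulfV // expf_neq0 // pnatr_eq0.
by rewrite !mul0r expr0n mul0r.
Qed.

Lemma gpk_prob_ebit0 i :
  (#|[set x | f x i]| * 2 = 2 ^ n)%N -> gpk_prob f (ebit i) (zerob n) = 0.
Proof.
move=> half; rewrite gpk_probE /walsh_sum.
under eq_bigr => x _ do rewrite walsh0l mul1r walsh_ebit.
by rewrite sum_sign_half ?expr0n ?mul0r // card_bits -half cardsE.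
Qed.

Lemma balanced_bit_half :
  is_balanced f -> (exists x, f x = zerob m) ->
  exists i, (#|[set x | f x i]| * 2 = 2 ^ n)%N.
Proof.
move=> [a [b [ab [fab [ha hb]]]]] [x0 fx0].
have [c [c0 fc hc]] : exists c, [/\ c != zerob m,
    forall x, f x = zerob m \/ f x = c & (#|[set x | f x == c]| * 2 = 2 ^ n)%N].
  case: (fab x0); rewrite fx0 => ?; subst.
    by exists b; split; rewrite // eq_sym.
  by exists a; split => // x; case: (fab x) => ->; [right | left].
move: (c0); rewrite bits_neq0E => /existsP[i ci]; exists i.
rewrite -hc; congr (_ * 2)%N; apply: eq_card => x; rewrite !inE.
by have [->|->] := fc x; rewrite ?eqxx ?ci // ffunE eq_sym (negbTE c0).
Qed.

Lemma eq_runs_prob (E1 E2 : pred {ffun 'I_m -> bits n}) :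
  E1 =1 E2 -> runs_prob f E1 = runs_prob f E2.
Proof. by move=> eqE; apply: eq_bigl. Qed.

Lemma runs_prob_pred1 d0 : runs_prob f (pred1 d0) = \prod_i gpk_prob f (ebit i) (d0 i).
Proof. by rewrite /runs_prob (big_pred1 d0). Qed.

Lemma runs_probC (E : pred {ffun 'I_m -> bits n}) :
  runs_prob f (fun d => ~~ E d) = 1 - runs_prob f E.
Proof.
have total : \sum_(d : {ffun 'I_m -> bits n}) \prod_i gpk_prob f (ebit i) (d i) = 1.
  rewrite -(bigA_distr_bigA (fun i w => gpk_prob f (ebit i) w)).
  by apply: big1 => i _; apply: sum_gpk_prob.
by rewrite -total (bigID E) /= addrC addrK.
Qed.

End GPK.

Lemma forall_eq0_ffun n m (d : {ffun 'I_m -> bits n}) :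
  [forall i, d i == zerob n] = (d == [ffun=> zerob n]).
Proof.
apply/forallP/eqP => [d0|-> i]; last by rewrite ffunE.
by apply/ffunP => i; rewrite ffunE; apply/eqP.
Qed.

Theorem theorem3p3 (n m : nat) (f : bits n -> bits m) :
  (is_constant f \/ is_balanced f) ->
  (exists x, f x = zerob m) ->
  (is_constant f ->
     runs_prob f (fun d => [forall i, d i == zerob n]) = 1) /\
  (is_balanced f ->
     runs_prob f (fun d => [exists i, d i != zerob n]) = 1).
Proof.
move=> _ zero_in_range; split.
  move=> [c fc]; rewrite (eq_runs_prob _ (@forall_eq0_ffun n m)) runs_prob_pred1.
  by apply: big1 => i _; rewrite ffunE (gpk_prob_const _ _ fc) eqxx.
move=> fbal; have [i half] := balanced_bit_half fbal zero_in_range.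
have exists_neq0 (d : {ffun 'I_m -> bits n}) :
    [exists i, d i != zerob n] = ~~ pred1 [ffun=> zerob n] d.
  by rewrite /= -forall_eq0_ffun negb_forall.
rewrite (eq_runs_prob _ exists_neq0) runs_probC runs_prob_pred1.
by rewrite (bigD1 i) //= ffunE gpk_prob_ebit0 // mul0r subr0.
Qed.
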